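(* Let $\mathbb{X}\subseteq\mathbb{R}^n$, let $\mathbb{Y}$ be a finite set of classes, and let $D$ be a distribution on $\mathbb{X}\times\mathbb{Y}$ with joint density $p(\bm{x},k)$, marginal density $p(\bm{x})=\sum_k p(\bm{x},k)$ and posterior $p(\mathrm{y}=k\mid\mathbf{x}=\bm{x})=p(\bm{x},k)/p(\bm{x})$. Fix a distance $d$ on $\mathbb{X}$ and $\epsilon>0$, and for $\bm{x}\in\mathbb{X}$ let $\mathbb{V}_{\bm{x}}=\{\bm{x'}\in\mathbb{X}: d(\bm{x},\bm{x'})\le\epsilon\}$. For a classifier $h:\mathbb{X}\to\mathbb{Y}$ and $(\bm{x},y)\in\mathbb{X}\times\mathbb{Y}$, say $\operatorname{Rob}(h,\bm{x},y;\mathbb{V}_{\bm{x}})$ holds iff both (i) there is no $\bm{x'}\in\mathbb{X}$ with $d(\bm{x},\bm{x'})\le\epsilon$ and $h(\bm{x'})\neq y$, and (ii) there is no $(\bm{x'},y')\in\mathbb{X}\times\mathbb{Y}$ with $p(\bm{x'},y')>0$, $d(\bm{x},\bm{x'})\le\epsilon$ and $h(\bm{x'})\neq y'$. Define the irreducible robustness error $$\zeta^\sharp_D=\inf_{h\ \text{measurable}}\ \mathbb{E}_{(\mathbf{x},\mathrm{y})\sim D}\big[1-\mathbf{1}_{\operatorname{Rob}(h,\mathbf{x},\mathrm{y};\mathbb{V}_{\mathbf{x}})}\big].$$ Then $$\zeta^\sharp_D\ \ge\ \int\Big\lceil 1-\max_k p(\mathrm{y}=k\mid\mathbf{x}=\bm{x})\Big\rceil\,p(\bm{x})\,d\bm{x}\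 \ge\ \beta_D .$$
   Context: $\lceil\cdot\rceil$ is the ceiling function, so for $t\in[0,1]$, $\lceil t\rceil=1$ if $t>0$ and $0$ if $t=0$. The Bayes error of $D$ is $\beta_D=\int\big(1-\max_k p(\mathrm{y}=k\mid\mathbf{x}=\bm{x})\big)\,p(\bm{x})\,d\bm{x}$. *)

From HB Require Import structures.
From mathcomp Require Import all_boot all_order all_algebra.
From mathcomp Require Import all_classical all_reals all_analysis.
Set Implicit Arguments. Unset Strict Implicit. Unset Printing Implicit Defensive.
Import Order.TTheory GRing.Theory Num.Theory.
Local Open Scope classical_set_scope.
Local Open Scope ring_scope.

Section Defs.
Variables (R : realType) (n : nat) (Y : finType).
Notation Rn := (n.-tuple R).

Definition box (a b : Rn) : set Rn :=
  [set x | forall i : 'I_n, tnth a i < tnth x i <= tnth b i].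

(* mu is the n-dimensional Lebesgue measure on the Borel sets of R^n
   (characterized by giving every box its volume). *)
Definition is_lebesgue_Rn (mu : {measure set Rn -> \bar R}) : Prop :=
  forall a b : Rn, (forall i, tnth a i <= tnth b i) ->
    mu (box a b) = (\prod_(i < n) (tnth b i - tnth a i))%:E.

Definition is_distance (X : set Rn) (d : Rn -> Rn -> R) : Prop :=
  [/\ forall x y, X x -> X y -> 0 <= d x y,
      forall x y, X x -> X y -> (d x y = 0 <-> x = y),
      forall x y, X x -> X y -> d x y = d y x &
      forall x y z, X x -> X y -> X z -> d x z <= d x y + d y z].

(* measurability of a classifier X -> Y (Y finite with discrete sigma-algebra) *)
Definition measurable_classifier (X : set Rn) (h : Rn -> Y) : Prop :=
  forall k : Y, measurable (X `&` h @^-1` [set k]).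

Definition Rob (X : set Rn) (d : Rn -> Rn -> R) (eps : R) (p : Rn -> Y -> R)
    (h : Rn -> Y) (x : Rn) (y : Y) : Prop :=
  (~ exists x', [/\ X x', d x x' <= eps & h x' != y]) /\
  (~ exists x' y', [/\ X x', 0 < p x' y', d x x' <= eps & h x' != y']).

(* E_{(x,y) ~ D} [1 - 1_{Rob(h,x,y;V_x)}], D having joint density p w.r.t. mu x counting *)
Definition rob_error (mu : {measure set Rn -> \bar R}) (X : set Rn)
    (d : Rn -> Rn -> R) (eps : R) (p : Rn -> Y -> R) (h : Rn -> Y) : \bar R :=
  (\sum_(k : Y) \int[mu]_(x in X)
     ((1 - (`[< Rob X d eps p h x k >])%:R) * p x k)%:E)%E.

Definition irreducible_rob_error (mu : {measure set Rn -> \bar R}) (X : set Rn)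
    (d : Rn -> Rn -> R) (eps : R) (p : Rn -> Y -> R) : \bar R :=
  ereal_inf [set rob_error mu X d eps p h | h in measurable_classifier X].

Definition marginal (p : Rn -> Y -> R) (x : Rn) : R := \sum_(k : Y) p x k.
Definition posterior (p : Rn -> Y -> R) (x : Rn) (k : Y) : R :=
  p x k / marginal p x.
Definition max_posterior (p : Rn -> Y -> R) (x : Rn) : R :=
  \big[Num.max/0]_(k : Y) posterior p x k.

Definition ceilR (t : R) : R := (Num.ceil t)%:~R.

Definition bayes_error (mu : {measure set Rn -> \bar R}) (X : set Rn)
    (p : Rn -> Y -> R) : \bar R :=
  \int[mu]_(x in X) ((1 - max_posterior p x) * marginal p x)%:E.

End Defs.

From HB Require Import structures.
From mathcomp Require Import all_boot all_order all_algebra.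
From mathcomp Require Import all_classical all_reals all_analysis.
From mathcomp Require Import lra.
Set Implicit Arguments. Unset Strict Implicit. Unset Printing Implicit Defensive.
Import Order.TTheory GRing.Theory Num.Theory.
Local Open Scope classical_set_scope.
Local Open Scope ring_scope.

(* Let c(x) := ceil (1 - max_k p(k|x)), which lies in {0, 1}.  If p(x, k) > 0
   and c(x) = 1, some other class j also has p(x, j) > 0; as x lies in its own
   neighbourhood V_x and h x cannot equal both k and j, clause (ii) of Rob fails
   at (x, k) whatever h is.  So c(x) p(x, k) is pointwise below the robustness
   loss of any h, and summing over k and integrating gives the first
   inequality.  The second one is t <= ceil t. *)

Lemma ge0_le_integral_nonmeasurable d (T : measurableType d) (R : realType)
    (mu : {measure set T -> \bar R}) (D : set T) (f g : T -> \bar R) :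
  (forall x, D x -> (0 <= f x)%E) -> (forall x, D x -> (f x <= g x)%E) ->
  (\int[mu]_(x in D) f x <= \int[mu]_(x in D) g x)%E.
Proof.
move=> f_ge0 le_fg.
have g_ge0 x : D x -> (0 <= g x)%E.
  by move=> Dx; exact: le_trans (f_ge0 _ Dx) (le_fg _ Dx).
rewrite (ge0_integralE _ f_ge0) (ge0_integralE _ g_ge0).
apply: ereal_sup_le => _ [s sf <-]; exists s => // x.
apply: le_trans (sf x) _; rewrite /patch; case: ifP => // /set_mem Dx.
exact: le_fg.
Qed.

Section posterior_at_a_point.
Variables (R : realType) (n : nat) (Y : finType).
Variables (p : n.-tuple R -> Y -> R) (x : n.-tuple R).
Hypothesis p_ge0 : forall k, 0 <= p x k.

Lemma marginal_ge0 : 0 <= marginal p x.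
Proof. exact: sumr_ge0. Qed.

Lemma le_marginal k : p x k <= marginal p x.
Proof. by rewrite /marginal (bigD1 k) //= lerDl sumr_ge0. Qed.

Lemma posterior_ge0 k : 0 <= posterior p x k.
Proof. by rewrite divr_ge0 ?marginal_ge0. Qed.

Lemma posterior_le1 k : posterior p x k <= 1.
Proof.
rewrite /posterior; have [->|m_neq0] := eqVneq (marginal p x) 0.
  by rewrite invr0 mulr0.
by rewrite ler_pdivrMr ?lt0r ?m_neq0 ?marginal_ge0 // mul1r le_marginal.
Qed.

Lemma max_posterior_ge0 : 0 <= max_posterior p x.
Proof.
apply: (big_ind (fun v => 0 <= v)) => // [a b|k _]; last exact: posterior_ge0.
by rewrite le_max => ->.
Qed.

Lemma max_posterior_le1 : max_posterior p x <= 1.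
Proof.
apply: (big_ind (fun v => v <= 1)) => // [a b|k _]; last exact: posterior_le1.
by rewrite ge_max => -> ->.
Qed.

Lemma max_posterior_eq1 k :
  0 < marginal p x -> p x k = marginal p x -> max_posterior p x = 1.
Proof.
move=> m_gt0 pk_eq; apply/le_anti; rewrite max_posterior_le1 /=.
have <- : posterior p x k = 1 by rewrite /posterior pk_eq divff ?gt_eqF.
exact: le_bigmax.
Qed.

Lemma max_posterior_lt1 :
  (forall k, p x k < marginal p x) -> max_posterior p x < 1.
Proof.
move=> pk_lt; apply: (big_ind (fun v => v < 1)) => // [a b|k _].
  by rewrite gt_max => -> ->.
have m_gt0 : 0 < marginal p x by apply: le_lt_trans (pk_lt k).
by rewrite ltr_pdivrMr // mul1r.
Qed.

Lemma ceil_one_sub_max_posterior_ge0 : 0 <= ceilR (1 - max_posterior p x).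
Proof. by rewrite /ceilR ler0z ceil_ge0; have := max_posterior_le1; lra. Qed.

Lemma ceil_one_sub_max_posterior_le1 : ceilR (1 - max_posterior p x) <= 1.
Proof.
by rewrite /ceilR lerz1 ceil_le_int /=; have := max_posterior_ge0; lra.
Qed.

Lemma ceil_one_sub_max_posterior : 0 < marginal p x ->
  ceilR (1 - max_posterior p x) = \prod_k (p x k < marginal p x)%R%:R.
Proof.
move=> m_gt0; have [pk_lt|] := pselect (forall k, p x k < marginal p x).
  rewrite big1 => [|k _]; last by rewrite pk_lt.
  rewrite /ceilR (@ceil_def _ _ 1) // subrr /=.
  by have := max_posterior_ge0; have := max_posterior_lt1 pk_lt; lra.
move=> /existsNP[k /negP]; rewrite -leNgt => m_le_pk.
have pk_eq : p x k = marginal p x by apply/le_anti; rewrite m_le_pk le_marginal.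
rewrite (bigD1 k) //= pk_eq ltxx mul0r.
by rewrite (max_posterior_eq1 m_gt0 pk_eq) subrr /ceilR ceil0.
Qed.

Lemma ceil_one_sub_max_posterior_mul k :
  ceilR (1 - max_posterior p x) * p x k =
  (\prod_j (p x j < marginal p x)%R%:R) * p x k.
Proof.
have [m_eq0|m_neq0] := eqVneq (marginal p x) 0.
  have -> : p x k = 0 by apply/le_anti; rewrite p_ge0 -m_eq0 le_marginal.
  by rewrite !mulr0.
by rewrite ceil_one_sub_max_posterior // lt0r m_neq0 marginal_ge0.
Qed.

Lemma two_classes_of_ceil_neq0 k : 0 < p x k ->
  ceilR (1 - max_posterior p x) != 0 -> exists2 j, j != k & 0 < p x j.
Proof.
move=> pk_gt0; have m_gt0 := lt_le_trans pk_gt0 (le_marginal k).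
rewrite ceil_one_sub_max_posterior // (bigD1 k) //= mulf_eq0 negb_or pnatr_eq0.
rewrite eqb0 negbK => /andP[pk_lt _].
have : \sum_(j | j != k) p x j != 0.
  by move: pk_lt; rewrite /marginal (bigD1 k) //= ltrDl lt0r => /andP[].
by rewrite psumr_neq0 // => /hasP[j _ /andP[]]; exists j.
Qed.

End posterior_at_a_point.

Lemma not_Rob_of_two_classes (R : realType) (n : nat) (Y : finType)
    (X : set (n.-tuple R)) (d : n.-tuple R -> n.-tuple R -> R) (eps : R)
    (p : n.-tuple R -> Y -> R) (h : n.-tuple R -> Y) x j k :
  X x -> d x x <= eps -> j != k -> 0 < p x j -> 0 < p x k ->
  ~ Rob X d eps p h x k.
Proof.
move=> Xx dxx jk pj_gt0 pk_gt0 [_ no_violation]; apply: no_violation.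
have [hx_eq|hx_neq] := eqVneq (h x) k.
  by exists x, j; rewrite hx_eq eq_sym.
by exists x, k.
Qed.

Section robust_error_lower_bound.
Variables (R : realType) (n : nat) (Y : finType).
Variables (mu : {measure set (n.-tuple R) -> \bar R}) (X : set (n.-tuple R)).
Variables (p : n.-tuple R -> Y -> R) (d : n.-tuple R -> n.-tuple R -> R).
Variable eps : R.
Hypothesis mX : measurable X.
Hypothesis p_ge0 : forall x k, X x -> 0 <= p x k.
Hypothesis mp : forall k, measurable_fun X (fun x => p x k).
Hypothesis d_dist : is_distance X d.
Hypothesis eps_ge0 : 0 <= eps.

Let c x := ceilR (1 - max_posterior p x).

Lemma measurable_ceil_posterior_mul k :
  measurable_fun X (fun x => c x * p x k).
Proof.
(* No measurability of [ceil] is needed: [c] is rewritten as an indicator. *)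
apply: (eq_measurable_fun
  (fun x => (\prod_j (p x j < marginal p x)%R%:R) * p x k)).
  move=> x /set_mem Xx; rewrite /c ceil_one_sub_max_posterior_mul // => j.
  exact: p_ge0.
apply: measurable_realfun.measurable_funM => //; apply: measurable_prod => j _.
have -> : (fun x => ((p x j < marginal p x)%R%:R : R)) =
    (fun b : bool => (b%:R : R)) \o (fun x => p x j < marginal p x) by [].
apply: measurableT_comp => //.
by apply: measurable_realfun.measurable_fun_ltr => //; exact: measurable_sum.
Qed.

Lemma ceil_posterior_mul_le_rob_loss (h : n.-tuple R -> Y) x k : X x ->
  c x * p x k <= (1 - (`[< Rob X d eps p h x k >])%:R) * p x k.
Proof.
move=> Xx; have px_ge0 j : 0 <= p x j by exact: p_ge0.
have [pk_eq0|pk_gt0] := eqVneq (p x k) 0; first by rewrite pk_eq0 !mulr0.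
have {pk_gt0}pk_gt0 : 0 < p x k by rewrite lt0r pk_gt0 px_ge0.
have [c_eq0|c_neq0] := eqVneq (c x) 0.
  by rewrite c_eq0 mul0r mulr_ge0 // subr_ge0; case: (`[< _ >]).
have [j jk pj_gt0] := two_classes_of_ceil_neq0 px_ge0 pk_gt0 c_neq0.
have dxx : d x x <= eps.
  by case: d_dist => _ d_sep _ _; rewrite (d_sep x x Xx Xx).2.
rewrite asboolF; last exact: not_Rob_of_two_classes jk pj_gt0 pk_gt0.
by rewrite subr0 mul1r ler_piMl ?ceil_one_sub_max_posterior_le1.
Qed.

Lemma ceil_integral_le_rob_error h :
  (\int[mu]_(x in X) (c x * marginal p x)%:E <= rob_error mu X d eps p h)%E.
Proof.
have cp_ge0 k x : X x -> (0 <= (c x * p x k)%:E)%E.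
  move=> Xx; rewrite lee_fin mulr_ge0 ?p_ge0 //.
  by apply: ceil_one_sub_max_posterior_ge0 => j; exact: p_ge0.
under eq_integral do rewrite /marginal mulr_sumr -sumEFin.
rewrite ge0_integral_sum //; last first.
  move=> k; apply/measurable_realfun.measurable_EFinP.
  exact: measurable_ceil_posterior_mul.
apply: lee_sum => k _; apply: ge0_le_integral_nonmeasurable => x Xx.
  exact: cp_ge0.
by rewrite lee_fin ceil_posterior_mul_le_rob_loss.
Qed.

Lemma bayes_error_le_ceil_integral :
  (bayes_error mu X p <= \int[mu]_(x in X) (c x * marginal p x)%:E)%E.
Proof.
apply: ge0_le_integral_nonmeasurable => x Xx; have px_ge0 k := p_ge0 k Xx.
  by rewrite lee_fin mulr_ge0 ?marginal_ge0 // subr_ge0 max_posterior_le1.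
by rewrite lee_fin ler_wpM2r ?marginal_ge0 // ceil_ge.
Qed.

End robust_error_lower_bound.

Theorem theorem3 (R : realType) (n : nat) (Y : finType)
  (mu : {measure set (n.-tuple R) -> \bar R}) (X : set (n.-tuple R))
  (p : n.-tuple R -> Y -> R) (d : n.-tuple R -> n.-tuple R -> R) (eps : R) :
  is_lebesgue_Rn mu ->
  measurable X ->
  (forall x k, X x -> 0 <= p x k) ->
  (forall k, measurable_fun X (fun x => p x k)) ->
  (\sum_(k : Y) \int[mu]_(x in X) (p x k)%:E)%E = 1%E ->
  is_distance X d ->
  0 < eps ->
  (irreducible_rob_error mu X d eps p >=
     \int[mu]_(x in X) (ceilR (1 - max_posterior p x) * marginal p x)%:E)%E /\
  (\int[mu]_(x in X) (ceilR (1 - max_posterior p x) * marginal p x)%:E >=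
     bayes_error mu X p)%E.
Proof.
(* The bound holds for any measure and any total mass of [p]. *)
move=> _ mX p_ge0 mp _ d_dist eps_gt0; have eps_ge0 := ltW eps_gt0.
split; last exact: bayes_error_le_ceil_integral.
apply: le_ereal_inf_tmp => _ [h _ <-].
exact: ceil_integral_le_rob_error.
Qed.
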